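(* Let $G$ be a finite simple graph and let $2\leq k\leq\operatorname{mat}(G)$. If $M$ is a $k$-admissable matching of $G$, then either $M$ is a $(k-1)$-admissable matching, or there exists an edge $e\in M$ such that $M\setminus\{e\}$ is a $(k-1)$-admissable matching. Consequently, $\operatorname{aim}(G,k)\leq\operatorname{aim}(G,k-1)+1$.
   Context: $\operatorname{mat}(G)$ is the matching number. Two edges form a gap if they are disjoint and no edge of $G$ joins a vertex of one to a vertex of the other. A sequence $(a_1,\dots,a_n)$ of integers is $k$-admissable if $a_i\ge1$ and $\sum a_i\le n+k-1$. For $1\le k\le\operatorname{mat}(G)$, a matching $M$ is $k$-admissable if there are nonempty pairwise disjoint $M_1,\dots,M_r\subseteq M$ with union $M$ such that edges from different $M_i$'s always form a gap in $G$, $(|M_1|,\dots,|M_r|)$ is $k$-admissable, and the induced subgraph of $G$ on $\bigcup_{e\in M_i}e$ is a forest for each $i$. $\operatorname{aim}(G,k)$ is the maximum size of a $k$-admissable matching ($0$ if none). *)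

(* A finite simple graph on vertex type T is a symmetric,
   irreflexive relation e : rel T. Edges are 2-element vertex sets. *)
From mathcomp Require Import all_boot.
Set Implicit Arguments. Unset Strict Implicit. Unset Printing Implicit Defensive.

Section Graph.
Variables (T : finType) (e : rel T).

Definition is_edge (f : {set T}) : bool :=
  [exists x, exists y, (e x y) && (f == [set x; y])].

Definition matching (M : {set {set T}}) : bool :=
  [forall f in M, is_edge f] &&
  [forall f in M, forall g in M, (f != g) ==> [disjoint f & g]].

Definition mat : nat := \max_(M : {set {set T}} | matching M) #|M|.

Definition gap (f g : {set T}) : bool :=
  [disjoint f & g] && [forall x in f, forall y in g, ~~ e x y].

(* the induced subgraph G[S] is a forest: it has no cycle, i.e. no sequence
   of n >= 3 distinct vertices of S, consecutive ones adjacent and the last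
   adjacent to the first (such a sequence has at most #|T| vertices) *)
Definition induced_forest (S : {set T}) : bool :=
  [forall n : 'I_#|T|.+1, forall t : n.-tuple T,
     [&& uniq t, 2 < n & all (fun x => x \in S) t] ==> ~~ cycle e t].

Definition admissible_partition (k : nat) (M : {set {set T}})
    (P : {set {set {set T}}}) : bool :=
  [&& partition P M,
      [forall B1 in P, forall B2 in P, (B1 != B2) ==>
         [forall f in B1, forall g in B2, gap f g]],
      \sum_(B in P) #|B| <= #|P| + k - 1 &
      [forall B in P, induced_forest (\bigcup_(f in B) f)]].

Definition admissible (k : nat) (M : {set {set T}}) : bool :=
  [&& 1 <= k, k <= mat, matching M &
      [exists P, admissible_partition k M P]].

(* aim(G,k): maximum size of a k-admissable matching, 0 if none *)
Definition aim (k : nat) : nat :=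
  \max_(M : {set {set T}} | admissible k M) #|M|.

End Graph.

From mathcomp Require Import all_boot zify.

Set Implicit Arguments.
Unset Strict Implicit.
Unset Printing Implicit Defensive.

(* Take a k-admissible partition P of M into r blocks.  Since the block sizes
   sum to #|M|, the size condition reads #|M| <= r + k - 1.  If even
   #|M| <= r + k - 2 holds, P witnesses (k-1)-admissibility of M.  Otherwise
   #|M| > r, so some edge f of M is not a singleton block; deleting f from its
   block leaves r nonempty blocks covering M minus f, and the gap and forest
   conditions survive because they pass to subsets of blocks. *)

Section DeletePoint.
Variable T : finType.
Implicit Types (P : {set {set T}}) (D : {set T}).

Lemma exists_point_not_singleton_block P D :
  #|P| < #|D| -> exists2 x, x \in D & [set x] \notin P.
Proof.
move=> ltPD; apply/exists_inP; apply: contraLR ltPD => /exists_inPn singP.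
rewrite -leqNgt -(card_imset D (@set1_inj T)); apply/subset_leq_card.
by apply/subsetP => _ /imsetP[x Dx ->]; rewrite -[_ \in P]negbK singP.
Qed.

Lemma set0_notin_imset_setD1 P D x : partition P D -> [set x] \notin P ->
  set0 \notin [set B :\ x | B in P].
Proof.
move=> partP notPx; apply/imsetP => -[B PB /esym/eqP].
rewrite setD_eq0 subset1 => /orP[/eqP defB | /eqP defB].
  by rewrite -defB PB in notPx.
by have := partition_neq0 partP PB; rewrite defB eqxx.
Qed.

Lemma trivIimset_setD1 P D x : partition P D -> [set x] \notin P ->
  trivIset [set B :\ x | B in P] /\ {in P &, injective (fun B => B :\ x)}.
Proof.
move=> partP notPx.
apply: trivIimset _ (set0_notin_imset_setD1 partP notPx) => B C PB PC CB.
apply: disjointW (subsetDl _ _) (subsetDl _ _) _.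
by have /trivIsetP := partition_trivIset partP; apply; rewrite // eq_sym.
Qed.

Lemma partition_setD1 P D x : partition P D -> [set x] \notin P ->
  partition [set B :\ x | B in P] (D :\ x).
Proof.
move=> partP notPx; have [triv _] := trivIimset_setD1 partP notPx.
apply/and3P; split=> //.
  rewrite cover_imset -(cover_partition partP); apply/eqP/setP => y.
  rewrite !inE; apply/bigcupP/andP => [[B PB] | [yx /bigcupP[B PB By]]].
    by rewrite !inE => /andP[yx By]; split=> //; apply/bigcupP; exists B.
  by exists B; rewrite // !inE yx.
exact: set0_notin_imset_setD1 partP notPx.
Qed.

Lemma card_imset_setD1 P D x : partition P D -> [set x] \notin P ->
  #|[set B :\ x | B in P]| = #|P|.
Proof.
by move=> partP notPx; have [_ /card_in_imset] := trivIimset_setD1 partP notPx.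
Qed.

End DeletePoint.

Section Graph.
Variables (T : finType) (e : rel T).
Implicit Types (S : {set T}) (M : {set {set T}}) (P : {set {set {set T}}}).

Lemma induced_forestS S1 S2 :
  S1 \subset S2 -> induced_forest e S2 -> induced_forest e S1.
Proof.
move=> sub12 /forallP forest2; apply/forallP => n; apply/forallP => t.
apply/implyP => /and3P[uniq_t n_gt2 t_S1].
have /forallP/(_ t)/implyP := forest2 n; apply; rewrite uniq_t n_gt2 /=.
by apply/allP => y ty; apply: (subsetP sub12); apply: (allP t_S1).
Qed.

Lemma matchingS M1 M2 : M1 \subset M2 -> matching e M2 -> matching e M1.
Proof.
move=> /subsetP sub12 /andP[/forall_inP edges2 /forall_inP disj2].
apply/andP; split; apply/forall_inP => f /sub12 M2f; first exact: edges2.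
by apply/forall_inP => g /sub12 M2g; have /forall_inP := disj2 f M2f; apply.
Qed.

Definition gapped_blocks P :=
  [forall B1 in P, forall B2 in P, (B1 != B2) ==>
     [forall f in B1, forall g in B2, gap e f g]].

Definition forest_blocks P :=
  [forall B in P, induced_forest e (\bigcup_(f in B) f)].

Lemma admissible_partitionE k M P :
  admissible_partition e k M P =
  [&& partition P M, gapped_blocks P, #|M| <= #|P| + k - 1 & forest_blocks P].
Proof.
rewrite /admissible_partition.
by case: (boolP (partition P M)) => // /card_partition ->.
Qed.

Section Shrink.
Variables (P : {set {set {set T}}}) (h : {set {set T}} -> {set {set T}}).
Hypothesis h_sub : {in P, forall B, h B \subset B}.

Lemma gapped_blocks_shrink :
  {in P &, injective h} -> gapped_blocks P -> gapped_blocks (h @: P).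
Proof.
move=> h_inj /forall_inP gapP; apply/forall_inP => _ /imsetP[B1 PB1 ->].
apply/forall_inP => _ /imsetP[B2 PB2 ->]; apply/implyP => hB12.
have B12 : B1 != B2 by apply: contraNneq hB12 => ->.
have /forall_inP/(_ B2 PB2)/implyP/(_ B12)/forall_inP gapB := gapP B1 PB1.
apply/forall_inP => f /(subsetP (h_sub PB1)) B1f.
apply/forall_inP => g /(subsetP (h_sub PB2)) B2g.
by have /forall_inP := gapB f B1f; apply.
Qed.

Lemma forest_blocks_shrink : forest_blocks P -> forest_blocks (h @: P).
Proof.
move=> /forall_inP forestP; apply/forall_inP => _ /imsetP[B PB ->].
apply: induced_forestS (forestP B PB).
by apply/bigcupsP => f /(subsetP (h_sub PB)) Bf; apply: bigcup_sup Bf.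
Qed.

End Shrink.

Lemma admissible_partition_setD1 k M P f :
  f \in M -> [set f] \notin P -> admissible_partition e k M P ->
  admissible_partition e k.-1 (M :\ f) [set B :\ f | B in P].
Proof.
rewrite !admissible_partitionE => Mf notPf /and4P[partP gapP sizeP forestP].
have [_ inj] := trivIimset_setD1 partP notPf.
have shrink : {in P, forall B, B :\ f \subset B} by move=> B _; apply: subsetDl.
apply/and4P; split.
- exact: partition_setD1.
- exact: gapped_blocks_shrink.
- rewrite (card_imset_setD1 partP notPf).
  by move: sizeP; rewrite (cardsD1 f M) Mf add1n; lia.
- exact: forest_blocks_shrink.
Qed.

Lemma admissible_predn k M : 1 < k -> admissible e k M ->
  admissible e k.-1 M \/ exists2 f, f \in M & admissible e k.-1 (M :\ f).
Proof.
move=> k_gt1 /and4P[_ k_le_mat matchM /existsP[P admP]].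
have k1_gt0 : 0 < k.-1 by lia.
have k1_le_mat : k.-1 <= mat e by lia.
have [small | big] := leqP #|M| (#|P| + k.-1 - 1).
  left; apply/and4P; split=> //; apply/existsP; exists P.
  by move: admP; rewrite !admissible_partitionE small => /and4P[-> -> _ ->].
have [f Mf notPf] : exists2 f, f \in M & [set f] \notin P.
  by apply: exists_point_not_singleton_block; lia.
right; exists f => //; apply/and4P; split=> //.
  exact: matchingS (subD1set M f) matchM.
apply/existsP; exists [set B :\ f | B in P].
exact: admissible_partition_setD1.
Qed.

End Graph.

Theorem lemma3p5 (T : finType) (e : rel T) (e_sym : symmetric e)
    (e_irr : irreflexive e) (k : nat) (hk2 : 2 <= k) (hkm : k <= mat e) :
  (forall M : {set {set T}}, admissible e k M ->
     admissible e k.-1 M \/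
     exists2 f, f \in M & admissible e k.-1 (M :\ f)) /\
  aim e k <= aim e k.-1 + 1.
Proof.
split=> [M|]; first exact: admissible_predn.
apply/bigmax_leqP => M /(admissible_predn hk2) [admM | [f Mf admMf]].
  exact: leq_trans (leq_bigmax_cond _ admM) (leq_addr 1 _).
by rewrite (cardsD1 f M) Mf addnC leq_add2r; apply: leq_bigmax_cond admMf.
Qed.
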